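(* Let $K$ be a $p$-adic field and fix either the semi-algebraic or the subanalytic structure on $K$; ''definable'' refers to this structure. Let $X\subset K^r$ be a definable set, let $\lambda>0$, and let $f:X\to K$ be a definable $\lambda$-Lipschitz function. Let $X=\bigcup_{i=1}^k X_i$ be a finite covering of $X$ by definable subsets $X_i$, and put $f_i=f|_{X_i}$. Suppose that for each $i$, $f_i$ extends to a definable $\Lambda_i$-Lipschitz map $\tilde f_i:K^r\to K$, where $\Lambda_i\ge\lambda$. Then $f$ extends to a definable $\Lambda$-Lipschitz map $\tilde f:K^r\to K$, where $\Lambda=\max_i\Lambda_i$.
   Context: $K$ is a finite field extension of $\mathbb{Q}_p$, with valuation $\mathrm{ord}$, residue field of cardinality $q$, and norm $|x|=q^{-\mathrm{ord}(x)}$ (with $|0|=0$); $K^n$ carries the max-norm $|(x_1,\dots,x_n)|=\max_i|x_i|$. Definable means definable (with parameters) in the semi-algebraic structure (the field language on $K$) or in the subanalytic structure (the field language expanded by restricted analytic functions, i.e. functions on $\mathcal{O}_K^n$ given by convergent power series, extended by zero outside $\mathcal{O}_K^n$). A function $g:A\to K^s$ with $A\subset K^n$ is $\lambda$-Lipschitz if $|g(a)-g(b)|\le\lambda|a-b|$ for all $a,b\in A$. *)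

From HB Require Import structures.
From mathcomp Require Import all_boot all_order all_algebra.
From mathcomp Require Import reals.
Set Implicit Arguments. Unset Strict Implicit. Unset Printing Implicit Defensive.
Import Order.TTheory GRing.Theory Num.Theory.
Local Open Scope ring_scope.

Section PAdic.
Variable K : fieldType.
Variable ord : K -> int.

(* "ord x >= N", with the convention ord 0 = +oo *)
Definition valge (x : K) (N : int) : Prop := x = 0 \/ N <= ord x.

Definition val_cauchy (u : nat -> K) : Prop :=
  forall M : int, exists N, forall m n, (N <= m)%N -> (N <= n)%N ->
    valge (u m - u n) M.

Definition val_converges (u : nat -> K) (L : K) : Prop :=
  forall M : int, exists N, forall n, (N <= n)%N -> valge (u n - L) M.

(* K is a p-adic field (finite extension of Q_p) with normalized discrete
   valuation ord and residue field of cardinality q: a complete discretely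
   valued field of characteristic 0, whose valuation is positive on p, with
   finite residue field of q elements. *)
Record padic_field (p q : nat) : Prop := {
  pf_prime : prime p;
  pf_char0 : forall n : nat, (0 < n)%N -> n%:R != 0 :> K;
  pf_mul : forall x y, x != 0 -> y != 0 -> ord (x * y) = ord x + ord y;
  pf_add : forall x y, x != 0 -> y != 0 -> x + y != 0 ->
             Num.min (ord x) (ord y) <= ord (x + y);
  pf_unif : exists pi : K, pi != 0 /\ ord pi = 1;
  pf_p : valge p%:R 1;
  pf_residue : exists s : seq K, [/\ size s = q,
     forall i, (i < q)%N -> valge (nth 0 s i) 0,
     forall i j, (i < q)%N -> (j < q)%N -> i != j ->
        ~ valge (nth 0 s i - nth 0 s j) 1 &
     forall x, valge x 0 -> exists2 i, (i < q)%N & valge (x - nth 0 s i) 1];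
  pf_complete : forall u, val_cauchy u -> exists L, val_converges u L
}.

(* restricted analytic functions: given on O_K^n by a power series with
   coefficients in K tending to 0, and extended by zero outside O_K^n *)
Definition psum n (c : ('I_n -> nat) -> K) (x : 'I_n -> K) (N : nat) : K :=
  \sum_(m : {ffun 'I_n -> 'I_N.+1} | (\sum_i (m i : nat) <= N)%N)
     c (fun i => (m i : nat)) * \prod_i x i ^+ m i.

Definition restricted_analytic n (F : ('I_n -> K) -> K) : Prop :=
  exists c : ('I_n -> nat) -> K,
   [/\ forall M : int, exists D, forall m : 'I_n -> nat,
          (D <= \sum_i m i)%N -> valge (c m) M,
       forall x, (forall i, valge (x i) 0) -> val_converges (psum c x) (F x) &
       forall x, ~ (forall i, valge (x i) 0) -> F x = 0].

Inductive term : Type :=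
| TVar of nat
| TConst of K
| TAdd of term & term
| TMul of term & term
| TFn (n : nat) (F : ('I_n -> K) -> K) (ts : 'I_n -> term).

Inductive formula : Type :=
| FEq of term & term
| FNot of formula
| FAnd of formula & formula
| FEx of nat & formula.

Fixpoint teval (e : nat -> K) (t : term) : K :=
  match t with
  | TVar i => e i
  | TConst c => c
  | TAdd a b => teval e a + teval e b
  | TMul a b => teval e a * teval e b
  | TFn n F ts => F (fun i => teval e (ts i))
  end.

Definition upd (e : nat -> K) (i : nat) (y : K) : nat -> K :=
  fun j => if j == i then y else e j.

Fixpoint holds (e : nat -> K) (phi : formula) : Prop :=
  match phi with
  | FEq a b => teval e a = teval e b
  | FNot f => ~ holds e f
  | FAnd f g => holds e f /\ holds e g
  | FEx i f => exists y : K, holds (upd e i y) f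
  end.

(* which function symbols are allowed: an = false : semi-algebraic structure
   (pure field language), an = true : subanalytic structure *)
Definition allowed (an : bool) n (F : ('I_n -> K) -> K) : Prop :=
  an = true /\ restricted_analytic F.

Fixpoint tadm (an : bool) (t : term) : Prop :=
  match t with
  | TVar _ | TConst _ => True
  | TAdd a b | TMul a b => tadm an a /\ tadm an b
  | TFn n F ts => allowed an F /\ forall i, tadm an (ts i)
  end.

Fixpoint fadm (an : bool) (phi : formula) : Prop :=
  match phi with
  | FEq a b => tadm an a /\ tadm an b
  | FNot f => fadm an f
  | FAnd f g => fadm an f /\ fadm an g
  | FEx _ f => fadm an f
  end.

Definition env_of r (x : 'rV[K]_r) : nat -> K :=
  fun i => oapp (fun j : 'I_r => x ord0 j) 0 (insub i).

Definition definable_set (an : bool) r (A : 'rV[K]_r -> Prop) : Prop :=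
  exists phi, fadm an phi /\ forall x, A x <-> holds (env_of x) phi.

(* f restricted to A is definable: its graph {(x, f x) | x in A} in K^(r+1)
   (last coordinate = variable r) is definable *)
Definition definable_fun (an : bool) r (A : 'rV[K]_r -> Prop)
    (f : 'rV[K]_r -> K) : Prop :=
  exists phi, fadm an phi /\
    forall x y, (A x /\ y = f x) <-> holds (upd (env_of x) r y) phi.

Variable R : realType.
Variable q : nat.

Definition absK (x : K) : R := if x == 0 then 0 else (q%:R : R) ^ (- ord x).

Definition normv r (x : 'rV[K]_r) : R := \big[Num.max/0]_(i < r) absK (x ord0 i).

Definition lipschitz_on r (A : 'rV[K]_r -> Prop) (f : 'rV[K]_r -> K) (l : R) :=
  forall a b, A a -> A b -> absK (f a - f b) <= l * normv (a - b).

End PAdic.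

From HB Require Import structures.
From mathcomp Require Import all_boot all_order all_algebra.
From mathcomp Require Import reals.
From mathcomp Require Import ring zify.
From Stdlib Require Import Classical FunctionalExtensionality ClassicalEpsilon.
Import Order.TTheory GRing.Theory Num.Theory.
Local Open Scope ring_scope.
Set Implicit Arguments. Unset Strict Implicit. Unset Printing Implicit Defensive.

(* Let [i(x)] be the least index of a piece [X_i] at minimal distance from
   [x], and put [F x = ft_(i(x)) x]; on [X] this is [f x].  If every point of
   [X_(i(x))] is farther from [x] than [y] is, the ultrametric inequality
   makes the distances from [y] to all pieces equal to those from [x], so
   [i(y) = i(x)] and one extension gives the Lipschitz bound.  Otherwise, and
   symmetrically for [y], there are [a] in [X_(i(x))] and [b] in [X_(i(y))]
   with [|x - a|, |y - b| <= |x - y|], and the ultrametric inequality applied to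
   [(ft_i x - ft_i a) + (f a - f b) + (ft_j b - ft_j y)] gives the bound.
   [F] is definable because distance comparisons are: [|s| <= |t|] iff [s = z t]
   with [z] integral, and by Hensel's lemma [z] is integral iff [1 + pi z^l] is
   an [l]-th power, for [l = 2] ([l = 3] when [p = 2]). *)


Section Valuation.
Variables (K : fieldType) (ord : K -> int).

Lemma valge0 N : valge ord 0 N.
Proof. by left. Qed.

Lemma valgeW x N M : M <= N -> valge ord x N -> valge ord x M.
Proof. by move=> hMN [->|h]; [left|right; apply: le_trans h]. Qed.

Lemma valge_all_eq0 x : (forall M, valge ord x M) -> x = 0.
Proof. by move=> h; case: (h (ord x + 1)) => // hl; lia. Qed.

Variables p q : nat.
Hypothesis HK : padic_field ord p q.

Lemma ord_one : ord 1 = 0.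
Proof.
have := pf_mul HK (oner_neq0 K) (oner_neq0 K); rewrite mulr1 => h.
by apply/eqP; rewrite -(subrr (ord 1)) {2}h addrK.
Qed.

Lemma ord_inv x : x != 0 -> ord x^-1 = - ord x.
Proof.
by move=> hx; have := pf_mul HK hx (invr_neq0 hx); rewrite mulfV // ord_one; lia.
Qed.

Lemma ord_opp x : x != 0 -> ord (- x) = ord x.
Proof.
have n1 : (-1 : K) != 0 by rewrite oppr_eq0 oner_neq0.
have ordN1 : ord (-1) = 0.
  have := pf_mul HK n1 n1; rewrite mulrNN mulr1 ord_one; lia.
by move=> hx; rewrite -mulN1r (pf_mul HK) // ordN1 add0r.
Qed.

Lemma ord_exp x n : x != 0 -> ord (x ^+ n) = n%:Z * ord x.
Proof.
move=> hx; elim: n => [|n IH]; first by rewrite expr0 ord_one mul0r.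
by rewrite exprS (pf_mul HK) ?expf_neq0 // IH; lia.
Qed.

Lemma ord_add_lt x y : x != 0 -> y != 0 -> ord y < ord x ->
  x + y != 0 /\ ord (x + y) = ord y.
Proof.
move=> x0 y0 hlt; have s0 : x + y != 0.
  apply: contraTneq hlt => /eqP; rewrite addr_eq0 => /eqP ->.
  by rewrite ord_opp // ltxx.
split => //; apply/eqP; rewrite eq_le; apply/andP; split; last first.
  have := pf_add HK x0 y0 s0; rewrite ge_min => /orP[h|//].
  exact: le_trans (ltW hlt) h.
have nx0 : - x != 0 by rewrite oppr_eq0.
have := pf_add HK s0 nx0; rewrite addrAC subrr add0r ord_opp // => /(_ y0).
by rewrite ge_min (lt_geF hlt) orbF.
Qed.

Lemma valgeN x N : valge ord x N -> valge ord (- x) N.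
Proof.
case: (eqVneq x 0) => [->|hx]; first by rewrite oppr0.
by case=> [->|h]; [rewrite oppr0; left|right; rewrite ord_opp].
Qed.

Lemma valgeD x y N : valge ord x N -> valge ord y N -> valge ord (x + y) N.
Proof.
case: (eqVneq x 0) => [-> _|x0 [/eqP|hx]]; rewrite ?add0r // ?(negbTE x0) //.
case: (eqVneq y 0) => [-> _|y0 [/eqP|hy]]; rewrite ?addr0 //; first by right.
  by rewrite (negbTE y0).
case: (eqVneq (x + y) 0) => [->|s0]; first by left.
by right; apply: le_trans (pf_add HK x0 y0 s0); rewrite le_min hx hy.
Qed.

Lemma valgeB x y N : valge ord x N -> valge ord y N -> valge ord (x - y) N.
Proof. by move=> hx /valgeN; apply: valgeD. Qed.

Lemma valgeM x y N M : valge ord x N -> valge ord y M -> valge ord (x * y) (N + M).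
Proof.
case: (eqVneq x 0) => [-> _ _|x0]; first by rewrite mul0r; left.
case: (eqVneq y 0) => [-> _ _|y0]; first by rewrite mulr0; left.
case=> [/eqP|hx]; first by rewrite (negbTE x0).
case=> [/eqP|hy]; first by rewrite (negbTE y0).
by right; rewrite (pf_mul HK) // lerD.
Qed.

Lemma valge1 : valge ord 1 0.
Proof. by right; rewrite ord_one. Qed.

Lemma valge_nat n : valge ord n%:R 0.
Proof.
elim: n => [|n IH]; first by left.
by rewrite -addn1 natrD; apply: valgeD => //; apply: valge1.
Qed.

Lemma valgeX x n : valge ord x 0 -> valge ord (x ^+ n) 0.
Proof.
move=> hx; elim: n => [|n IH]; first by rewrite expr0; apply: valge1.
by rewrite exprS -[0]addr0; apply: valgeM.
Qed.

Lemma valge_subX u v N n : valge ord u 0 -> valge ord v 0 ->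
  valge ord (u - v) N -> valge ord (u ^+ n - v ^+ n) N.
Proof.
move=> hu hv huv; elim: n => [|n IH]; first by rewrite !expr0 subrr; left.
have -> : u ^+ n.+1 - v ^+ n.+1 = u * (u ^+ n - v ^+ n) + (u - v) * v ^+ n.
  by rewrite !exprS; ring.
apply: valgeD; first by rewrite -[N]add0r; apply: valgeM.
by rewrite -[N]addr0; apply: valgeM => //; apply: valgeX.
Qed.

Lemma valge_subX_linear u v N n : valge ord u 0 -> valge ord v 0 ->
  valge ord (u - v) N -> 0 <= N ->
  valge ord (u ^+ n - v ^+ n - n%:R * v ^+ n.-1 * (u - v)) (N + N).
Proof.
move=> hu hv huv hN; elim: n => [|n IH].
  by rewrite !expr0 subrr !mul0r subr0; left.
have -> : u ^+ n.+1 - v ^+ n.+1 - n.+1%:R * v ^+ n.+1.-1 * (u - v) =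
    u * (u ^+ n - v ^+ n - n%:R * v ^+ n.-1 * (u - v))
    + n%:R * v ^+ n.-1 * ((u - v) * (u - v)).
  case: n {IH} => [|n]; rewrite /= ?expr0 ?exprS; first by rewrite mulr1n; ring.
  by rewrite -[n.+2]addn1 natrD; ring.
apply: valgeD; first by rewrite -[N + N]add0r; apply: valgeM.
rewrite -[N + N]add0r; apply: valgeM; last exact: valgeM.
by rewrite -[0]addr0; apply: valgeM; [apply: valge_nat|apply: valgeX].
Qed.

End Valuation.

(* Newton's iteration for [X^l = a], with the derivative frozen at its value [l] at [1]. *)
Fixpoint root_iter (K : fieldType) (l : nat) (a : K) (n : nat) : K :=
  if n is n'.+1 then root_iter l a n' + (a - root_iter l a n' ^+ l) / l%:R else 1.

Section Hensel.
Variables (K : fieldType) (ord : K -> int) (p q : nat).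
Hypothesis HK : padic_field ord p q.
Variables (l : nat) (a : K).
Hypotheses (l_neq0 : l%:R != 0 :> K) (ord_l : ord l%:R = 0) (a_near1 : valge ord (a - 1) 1).

Let y n := root_iter l a n.

Lemma valge0_near1 z : valge ord (z - 1) 1 -> valge ord z 0.
Proof.
move=> h; have -> : z = (z - 1) + 1 by rewrite subrK.
by apply: (valgeD HK _ (valge1 HK)); apply: valgeW h.
Qed.

Lemma valge_root_step z N : valge ord (z ^+ l - a) N ->
  valge ord ((a - z ^+ l) / l%:R) N.
Proof.
have hli : valge ord (l%:R^-1 : K) 0 by right; rewrite (ord_inv HK l_neq0) ord_l oppr0.
by move=> h; rewrite -[N]addr0; apply: (valgeM HK _ hli); rewrite -opprB; apply: (valgeN HK).
Qed.

Lemma root_iter_step n : y n.+1 - y n = (a - y n ^+ l) / l%:R.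
Proof. by rewrite addrAC subrr add0r. Qed.

Lemma root_iter_defect n :
  valge ord (y n - 1) 1 /\ valge ord (y n ^+ l - a) (n%:Z + 1).
Proof.
elim: n => [|n [IH1 IH2]].
  by rewrite /y /= subrr expr1n -opprB; split; [left|apply: (valgeN HK)].
have hh := valge_root_step IH2; set h := (a - y n ^+ l) / l%:R in hh.
have -> : y n.+1 = y n + h by [].
split.
  by rewrite addrAC; apply: (valgeD HK IH1); apply: valgeW hh; lia.
have -> : (y n + h) ^+ l - a = (y n ^+ l - a) * (1 ^+ l.-1 - y n ^+ l.-1) +
    ((y n + h) ^+ l - y n ^+ l - l%:R * y n ^+ l.-1 * (y n + h - y n)).
  have -> : a = y n ^+ l + l%:R * h by rewrite /h mulrC divfK // addrC subrK.
  by rewrite expr1n; ring.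
have yO := valge0_near1 IH1; have hO : valge ord (y n + h - y n) (n%:Z + 1).
  by rewrite addrC addKr.
apply: (valgeD HK).
  have -> : n.+1%:Z + 1 = (n%:Z + 1) + 1 by lia.
  apply: (valgeM HK IH2); rewrite -opprB; apply: (valgeN HK).
  exact: (valge_subX HK _ yO (valge1 HK) IH1).
apply: valgeW (valge_subX_linear HK l _ yO hO _); try lia.
by apply: valge0_near1; rewrite addrAC; apply: (valgeD HK IH1); apply: valgeW hh; lia.
Qed.

Lemma root_iter_cauchy n m : (n <= m)%N -> valge ord (y m - y n) (n%:Z + 1).
Proof.
move=> /subnK <-; elim: (m - n)%N => [|d IH]; first by rewrite add0n subrr; left.
rewrite addSn -(subrK (y (d + n)) (y (d + n).+1)) -addrA.
apply: (valgeD HK _ IH); rewrite root_iter_step.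
by apply: valgeW (valge_root_step (root_iter_defect _).2); lia.
Qed.

Lemma hensel_root : exists w, w ^+ l = a.
Proof.
have [L hL] : exists L, val_converges ord y L.
  apply: (pf_complete HK) => M; exists `|M|%N => m n hm hn.
  case: (leqP n m) => hnm; first by apply: valgeW (root_iter_cauchy hnm); lia.
  by rewrite -opprB; apply: (valgeN HK); apply: valgeW (root_iter_cauchy (ltnW hnm)); lia.
exists L; apply/eqP; rewrite -subr_eq0; apply/eqP; apply: valge_all_eq0 => M.
have [N hN] := hL (Num.max M 0); set n := maxn N `|M|%N.
have hn := hN n (leq_maxl _ _); have [I1 I2] := root_iter_defect n.
have yO := valge0_near1 I1.
have LO : valge ord L 0.
  have -> : L = y n - (y n - L) by ring.
  apply: (valgeB HK yO).
  by apply: valgeW hn; rewrite le_max lexx orbT.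
have -> : L ^+ l - a = (y n ^+ l - a) - (y n ^+ l - L ^+ l) by ring.
apply: (valgeB HK).
  by apply: valgeW I2; have := leq_maxr N `|M|%N; lia.
by apply: valgeW (valge_subX HK _ yO LO hn); rewrite le_max lexx.
Qed.

End Hensel.

(* An exponent prime to [p]: then [1 + pi z^l] is an [l]-th power exactly when
   [z] is integral, because otherwise its valuation [1 + l ord z] is not
   divisible by [l]. *)
Definition root_exponent (p : nat) : nat := if p == 2%N then 3%N else 2%N.

Section IntegersDefinable.
Variables (K : fieldType) (ord : K -> int) (p q : nat).
Hypothesis HK : padic_field ord p q.

Let l := root_exponent p.

Lemma root_exponent_neq0 : l%:R != 0 :> K.
Proof. by apply: (pf_char0 HK); rewrite /l /root_exponent; case: ifP. Qed.

Lemma ord_root_exponent : ord l%:R = 0.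
Proof.
have l0 := root_exponent_neq0; case: (valge_nat HK l) => [/eqP|h]; first by rewrite (negbTE l0).
apply/eqP; rewrite eq_le h andbT leNgt; apply/negP => hgt.
have hl1 : valge ord (l%:R : K) 1 by right; lia.
have hp := pf_p HK.
suff : valge ord (1 : K) 1 by case=> [/eqP|]; rewrite ?oner_eq0 // (ord_one HK).
rewrite /l /root_exponent in hl1; case: (eqVneq p 2%N) hl1 => [p2|p_neq2] hl1.
  have -> : (1 : K) = 3%:R - 2%:R by rewrite -natrB.
  by apply: (valgeB HK) => //; rewrite -p2.
have [p2|p_odd] := even_prime (pf_prime HK); first by rewrite p2 eqxx in p_neq2.
have -> : (1 : K) = p%:R - 2%:R * (p./2)%:R.
  by rewrite -natrM -{1}(odd_double_half p) p_odd -muln2 mulnC natrD addrK.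
apply: (valgeB HK) => //.
by have := valgeM HK hl1 (valge_nat HK p./2); rewrite addr0.
Qed.

Lemma root_exponent_23 : l = 2%N \/ l = 3%N.
Proof. by rewrite /l /root_exponent; case: ifP; auto. Qed.

Lemma valge0_iff_root (pi : K) : pi != 0 -> ord pi = 1 -> forall z : K,
  valge ord z 0 <-> exists w : K, w ^+ l = 1 + pi * z ^+ l.
Proof.
move=> pi0 opi z; split.
  move=> hz; apply: (hensel_root HK root_exponent_neq0 ord_root_exponent).
  rewrite addrAC subrr add0r -[1]addr0; apply: (valgeM HK); first by right; rewrite opi.
  exact: (valgeX HK).
move=> [w hw]; case: (eqVneq z 0) => [->|z0]; first by left.
right; rewrite leNgt; apply/negP => hneg.
have t0 : pi * z ^+ l != 0 by rewrite mulf_neq0 ?expf_neq0.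
have ot : ord (pi * z ^+ l) = 1 + l%:Z * ord z.
  by rewrite (pf_mul HK) ?expf_neq0 // opi (ord_exp HK).
have lt0 : ord (pi * z ^+ l) < ord (1 : K).
  by rewrite ot (ord_one HK); case: root_exponent_23 => ->; lia.
have [s0 os] := ord_add_lt HK (oner_neq0 K) t0 lt0.
have w0 : w != 0.
  by apply: contraNneq s0 => w0; rewrite -hw w0 expr0n; case: root_exponent_23 => ->.
have := congr1 ord hw; rewrite os ot (ord_exp HK) //.
by case: root_exponent_23 => ->; lia.
Qed.

End IntegersDefinable.

Section Norms.
Variables (K : fieldType) (ord : K -> int) (p q : nat).
Hypothesis HK : padic_field ord p q.
Variable R : realType.

Local Notation abs := (absK ord R q).
Local Notation normv := (normv ord R q).

Lemma absK0 : abs 0 = 0.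
Proof. by rewrite /absK eqxx. Qed.

Lemma absK_neq0 x : x != 0 -> abs x = (q%:R : R) ^ (- ord x).
Proof. by move=> hx; rewrite /absK (negbTE hx). Qed.

Lemma residue_card_ge2 : (2 <= q)%N.
Proof.
have [s [_ _ hdis hall]] := pf_residue HK.
have [i iq hi] := hall 0 (valge0 _ _); have [j jq hj] := hall 1 (valge1 HK).
rewrite leqNgt; apply/negP => hq; have ji : j = i by lia.
have : valge ord (1 : K) 1.
  have -> : (1 : K) = (1 - nth 0 s i) - (0 - nth 0 s i) by ring.
  by apply: (valgeB HK) => //; rewrite -ji.
by case=> [/eqP|]; rewrite ?oner_eq0 // (ord_one HK).
Qed.

Lemma residue_card_gt1 : 1 < (q%:R : R).
Proof. by rewrite ltr1n; apply: residue_card_ge2. Qed.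

Lemma absK_gt0 x : x != 0 -> 0 < abs x.
Proof.
by move=> hx; rewrite absK_neq0 //; apply: exprz_gt0; apply: lt_trans residue_card_gt1.
Qed.

Lemma absK_ge0 x : 0 <= abs x.
Proof. by case: (eqVneq x 0) => [->|/absK_gt0/ltW]; rewrite ?absK0. Qed.

Lemma absK_eq0 x : (abs x == 0) = (x == 0).
Proof.
by case: (eqVneq x 0) => [->|/absK_gt0 hx]; rewrite ?absK0 ?eqxx // gt_eqF.
Qed.

Lemma absK_le s t : abs s <= abs t <-> s = 0 \/ (t != 0 /\ ord t <= ord s).
Proof.
have q1 := residue_card_gt1.
case: (eqVneq s 0) => [->|s0]; first by rewrite absK0 absK_ge0; split; [left|].
case: (eqVneq t 0) => [->|t0].
  by rewrite absK0 leNgt absK_gt0 //; split => // -[|[]]; [move/eqP; rewrite (negbTE s0)|].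
by rewrite !absK_neq0 // ler_eXz2l // lerN2; split; [right|case=> [/eqP|[]]; rewrite ?(negbTE s0)].
Qed.

Lemma absK_le_integral s t : abs s <= abs t <-> exists2 z, valge ord z 0 & s = z * t.
Proof.
rewrite absK_le; split.
  case: (eqVneq s 0) => [->|s0]; first by exists 0; rewrite ?mul0r //; left.
  case=> [/eqP|[t0 h]]; first by rewrite (negbTE s0).
  exists (s / t); last by rewrite divfK.
  by right; rewrite (pf_mul HK) ?invr_neq0 // (ord_inv HK) //; lia.
move=> [z hz ->]; case: (eqVneq z 0) => [->|z0]; first by left; rewrite mul0r.
case: (eqVneq t 0) => [->|t0]; first by left; rewrite mulr0.
case: hz => [/eqP|hz]; first by rewrite (negbTE z0).
by right; split => //; rewrite (pf_mul HK) //; lia.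
Qed.

Lemma absKN x : abs (- x) = abs x.
Proof.
by case: (eqVneq x 0) => [->|x0]; rewrite ?oppr0 // !absK_neq0 ?oppr_eq0 // (ord_opp HK).
Qed.

Lemma absKD_le x y c : abs x <= c -> abs y <= c -> abs (x + y) <= c.
Proof.
case: (eqVneq x 0) => [-> _|x0]; first by rewrite add0r.
case: (eqVneq y 0) => [-> + _|y0]; first by rewrite addr0.
case: (eqVneq (x + y) 0) => [-> hx _|s0]; first by rewrite absK0; exact: le_trans (absK_ge0 x) hx.
have hm := pf_add HK x0 y0 s0.
case: (lerP (ord x) (ord y)) => hxy hx hy.
  by apply: le_trans hx; apply/absK_le; right; split; rewrite // (le_trans _ hm) // le_min lexx.
by apply: le_trans hy; apply/absK_le; right; split; rewrite // (le_trans _ hm) // le_min lexx ltW.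
Qed.

Lemma normv_ge0 r (v : 'rV[K]_r) : 0 <= normv v.
Proof. exact: bigmax_ge_id. Qed.

Lemma normv_le r (v : 'rV[K]_r) c :
  normv v <= c <-> 0 <= c /\ forall i, abs (v ord0 i) <= c.
Proof.
split; first by move/bigmax_leP => [h1 h2]; split => // i; apply: h2.
by move=> [h1 h2]; apply/bigmax_leP; split => // i _; apply: h2.
Qed.

Lemma absK_le_normv r (v : 'rV[K]_r) i : abs (v ord0 i) <= normv v.
Proof. exact: le_bigmax. Qed.

Lemma normv_attained r (v : 'rV[K]_r) : normv v = 0 \/ exists i, normv v = abs (v ord0 i).
Proof.
apply: (big_ind (fun m => m = 0 \/ exists i, m = abs (v ord0 i))); first by left.
  by move=> x y hx hy; rewrite /Num.max; case: ifP.
by move=> i _; right; exists i.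
Qed.

Lemma normvD_le r (u w : 'rV[K]_r) c : normv u <= c -> normv w <= c -> normv (u + w) <= c.
Proof.
move=> /normv_le [c0 hu] /normv_le [_ hw]; apply/normv_le; split => // i.
by rewrite mxE; apply: absKD_le.
Qed.

Lemma normvN r (u : 'rV[K]_r) : normv (- u) = normv u.
Proof. by apply: eq_bigr => i _; rewrite mxE absKN. Qed.

Lemma normv_sym r (x y : 'rV[K]_r) : normv (x - y) = normv (y - x).
Proof. by rewrite -opprB normvN. Qed.

Lemma normv_le0 r (u : 'rV[K]_r) : normv u <= 0 -> u = 0.
Proof.
move=> /normv_le [_ h]; apply/matrixP => a i; rewrite mxE ord1.
by apply/eqP; rewrite -absK_eq0 eq_le h absK_ge0.
Qed.

Lemma normv_le_coords r (u v : 'rV[K]_r) : normv u <= normv v <->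
  forall i, u ord0 i = 0 \/ exists j, exists2 z, valge ord z 0 & u ord0 i = z * v ord0 j.
Proof.
rewrite normv_le; split.
  move=> [_ h] i; case: (normv_attained v) => [e|[j e]].
    by left; apply/eqP; rewrite -absK_eq0 eq_le absK_ge0 andbT -e h.
  by right; exists j; apply/absK_le_integral; rewrite -e.
move=> h; split => [|i]; first exact: normv_ge0.
case: (h i) => [->|[j hj]]; first by rewrite absK0 normv_ge0.
by apply: le_trans (absK_le_normv v j); apply/absK_le_integral.
Qed.

Lemma normv_isosceles r (x y b : 'rV[K]_r) :
  normv (x - y) < normv (x - b) -> normv (y - b) = normv (x - b).
Proof.
move=> h; apply/eqP; rewrite eq_le; apply/andP; split.
  have -> : y - b = (y - x) + (x - b) by rewrite addrA subrK.
  by apply: normvD_le => //; rewrite normv_sym ltW.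
rewrite leNgt; apply/negP => h2.
have : normv (x - b) <= Num.max (normv (x - y)) (normv (y - b)).
  have -> : x - b = (x - y) + (y - b) by rewrite addrA subrK.
  by apply: normvD_le; rewrite le_max lexx ?orbT.
by rewrite le_max !leNgt h h2.
Qed.

End Norms.

Section Formulas.
Variable K : fieldType.

Fixpoint trename (s : nat -> nat) (t : term K) : term K :=
  match t with
  | TVar i => TVar K (s i)
  | TConst c => TConst c
  | TAdd a b => TAdd (trename s a) (trename s b)
  | TMul a b => TMul (trename s a) (trename s b)
  | TFn n F ts => TFn F (fun i => trename s (ts i))
  end.

Fixpoint frename (s : nat -> nat) (phi : formula K) : formula K :=
  match phi with
  | FEq a b => FEq (trename s a) (trename s b)
  | FNot f => FNot (frename s f)
  | FAnd f g => FAnd (frename s f) (frename s g)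
  | FEx i f => FEx (s i) (frename s f)
  end.

Lemma teval_rename s (e : nat -> K) t : teval e (trename s t) = teval (e \o s) t.
Proof.
elim: t => //= [a -> b ->|a -> b ->|n F ts IH] //.
by congr F; apply: functional_extensionality => i; apply: IH.
Qed.

Lemma holds_rename s : injective s -> forall phi (e : nat -> K),
  holds e (frename s phi) <-> holds (e \o s) phi.
Proof.
move=> s_inj; elim=> [a b|f IH|f IHf g IHg|i f IH] e /=.
- by rewrite !teval_rename.
- by rewrite IH.
- by rewrite IHf IHg.
have upd_rename y : upd e (s i) y \o s = upd (e \o s) i y.
  by apply: functional_extensionality => j; rewrite /upd /= (inj_eq s_inj).
by split => -[y hy]; exists y; move: hy; rewrite IH upd_rename.
Qed.

Lemma fadm_rename (ord : K -> int) an s phi : fadm ord an phi -> fadm ord an (frename s phi).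
Proof.
have tadm_rename t : tadm ord an t -> tadm ord an (trename s t).
  by elim: t => //= [a ha b hb|a ha b hb|n F ts IH] => [[]|[]|[]]; auto.
by elim: phi => /= [a b []|f IH|f IHf g IHg []|i f IH]; auto.
Qed.

Fixpoint TExp (n : nat) (t : term K) : term K :=
  if n is n'.+1 then TMul t (TExp n' t) else TConst 1.

Lemma teval_TExp e n t : teval e (TExp n t) = teval e t ^+ n.
Proof. by elim: n => //= n ->; rewrite exprS. Qed.

Lemma tadm_TExp (ord : K -> int) an n t : tadm ord an t -> tadm ord an (TExp n t).
Proof. by move=> h; elim: n => //= n IH; split. Qed.

Definition FTrue : formula K := FEq (TConst 0) (TConst 0).
Definition FOr (a b : formula K) := FNot (FAnd (FNot a) (FNot b)).
Definition FImp (a b : formula K) := FNot (FAnd a (FNot b)).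

Lemma holds_FOr e a b : holds e (FOr a b) <-> holds e a \/ holds e b.
Proof. by rewrite /FOr /=; tauto. Qed.

Lemma holds_FImp e a b : holds e (FImp a b) <-> (holds e a -> holds e b).
Proof. by rewrite /FImp /=; tauto. Qed.

Fixpoint FExs (o n : nat) (phi : formula K) : formula K :=
  if n is n'.+1 then FEx o (FExs o.+1 n' phi) else phi.

Definition FAlls (o n : nat) (phi : formula K) : formula K :=
  FNot (FExs o n (FNot phi)).

Definition set_block (e : nat -> K) (o n : nat) (g : nat -> K) : nat -> K :=
  fun j => if (o <= j < o + n)%N then g (j - o)%N else e j.

Lemma set_block0 e o g : set_block e o 0 g = e.
Proof.
apply: functional_extensionality => j; rewrite /set_block addn0.
by case: leqP => //= h; rewrite ltnNge h.
Qed.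

Lemma set_blockS e o n g :
  set_block e o n.+1 g = set_block (upd e o (g 0%N)) o.+1 n (fun m => g m.+1).
Proof.
apply: functional_extensionality => j; rewrite /set_block /upd.
case: ifP => h1; case: ifP => h2; try case: eqP => h3; try (exfalso; lia).
- by have -> : (j - o = (j - o.+1).+1)%N by lia.
- by rewrite h3 subnn.
- by [].
Qed.

Lemma holds_FExs n phi : forall o e,
  holds e (FExs o n phi) <-> exists g, holds (set_block e o n g) phi.
Proof.
elim: n => [|n IH] o e /=.
  by split => [h|[g]]; [exists (fun _ => 0)|]; rewrite set_block0.
split => [[y /IH [g hg]]|[g hg]].
  by exists (fun m => if m is m'.+1 then g m' else y); rewrite set_blockS.
by exists (g 0%N); apply/IH; exists (fun m => g m.+1); rewrite -set_blockS.
Qed.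

Lemma holds_FAlls n phi o e :
  holds e (FAlls o n phi) <-> forall g, holds (set_block e o n g) phi.
Proof.
rewrite /FAlls /= holds_FExs; split => [h g|h [g]] /=; last exact.
by apply: NNPP => hn; apply: h; exists g.
Qed.

Lemma fadm_FExs (ord : K -> int) an o n phi : fadm ord an phi -> fadm ord an (FExs o n phi).
Proof. by elim: n o => //= n IH o h; apply: IH. Qed.

Definition FBigAnd (T : Type) (s : seq T) (F : T -> formula K) : formula K :=
  foldr (fun x acc => FAnd (F x) acc) FTrue s.

Definition FBigOr (T : Type) (s : seq T) (F : T -> formula K) : formula K :=
  FNot (FBigAnd s (fun x => FNot (F x))).

Lemma holds_FBigAnd (T : eqType) (s : seq T) F e :
  holds e (FBigAnd s F) <-> forall x, x \in s -> holds e (F x).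
Proof.
elim: s => [|x s IH] /=; first by split => // _ x; rewrite in_nil.
rewrite IH; split => [[hx hs] y|h].
  by rewrite in_cons => /orP[/eqP->|]; auto.
by split => [|y hy]; apply: h; rewrite in_cons ?eqxx ?hy ?orbT.
Qed.

Lemma holds_FBigOr (T : eqType) (s : seq T) F e :
  holds e (FBigOr s F) <-> exists2 x, x \in s & holds e (F x).
Proof.
rewrite /FBigOr /= holds_FBigAnd; split => [h|[x hx hF] h]; last exact: h x hx hF.
by apply: NNPP => hn; apply: h => x hx hF; apply: hn; exists x.
Qed.

Lemma fadm_FBigAnd (ord : K -> int) an (T : Type) (s : seq T) F :
  (forall x, fadm ord an (F x)) -> fadm ord an (FBigAnd s F).
Proof. by move=> h; elim: s => //= x s IH; split. Qed.

Lemma fadm_FBigOr (ord : K -> int) an (T : Type) (s : seq T) F :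
  (forall x, fadm ord an (F x)) -> fadm ord an (FBigOr s F).
Proof. by move=> h; rewrite /FBigOr /=; apply: fadm_FBigAnd. Qed.

Lemma env_of_lt r (x : 'rV[K]_r) m (h : (m < r)%N) : env_of x m = x ord0 (Ordinal h).
Proof. by rewrite /env_of insubT. Qed.

Lemma env_of_ge r (x : 'rV[K]_r) m : (r <= m)%N -> env_of x m = 0.
Proof. by move=> h; rewrite /env_of insubF //= ltnNge h. Qed.

Lemma row_env_of r (b : 'rV[K]_r) : \row_(m < r) env_of b m = b.
Proof.
apply/matrixP => a m; rewrite mxE ord1 (env_of_lt _ (ltn_ord m)).
by congr (b ord0 _); apply: val_inj.
Qed.

End Formulas.

Lemma exists_least_ord k (P : 'I_k -> Prop) :
  (exists i, P i) -> exists i, P i /\ forall i' : 'I_k, (i' < i)%N -> ~ P i'.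
Proof.
move=> [i0 h0]; elim: {i0}(i0 : nat) {-2}i0 (leqnn i0) h0 => [|n IH] i hi Pi.
  by exists i; split => // i'; lia.
case: (classic (exists2 i' : 'I_k, (i' < i)%N & P i')) => [[i' h1 h2]|hn].
  by apply: (IH i') => //; lia.
by exists i; split => // i' h1 h2; apply: hn; exists i'.
Qed.

Section ClosestPiece.
Variables (K : fieldType) (ord : K -> int) (R : realType) (p q : nat).
Hypothesis HK : padic_field ord p q.
Variables (r k : nat) (Xs : 'I_k -> 'rV[K]_r -> Prop).

Local Notation normv := (normv ord R q).

(* [closer_piece x i j]: the distance from [x] to [Xs i] is at most the
   distance to [Xs j]; infima need not be attained, hence this form. *)
Definition closer_piece x i j :=
  forall b, Xs j b -> exists2 a, Xs i a & normv (x - a) <= normv (x - b).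

Definition closest_piece x i := forall j, closer_piece x i j.

Definition first_closest x i :=
  closest_piece x i /\ forall i' : 'I_k, (i' < i)%N -> ~ closest_piece x i'.

Lemma closer_piece_refl x i : closer_piece x i i.
Proof. by move=> b hb; exists b. Qed.

Lemma closer_piece_total x i j : closer_piece x i j \/ closer_piece x j i.
Proof.
case: (classic (closer_piece x i j)) => h; [by left|right].
have [b hb hlt] : exists2 b, Xs j b & forall a, Xs i a -> normv (x - b) < normv (x - a).
  apply: NNPP => hn; apply: h => b hb; apply: NNPP => hn2; apply: hn; exists b => // a ha.
  by rewrite ltNge; apply/negP => hle; apply: hn2; exists a.
by move=> a ha; exists b => //; apply/ltW/hlt.
Qed.

Lemma closer_piece_trans x i j l :
  closer_piece x i j -> closer_piece x j l -> closer_piece x i l.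
Proof.
move=> hij hjl c hc; have [b hb hbc] := hjl c hc; have [a ha hab] := hij b hb.
by exists a => //; apply: le_trans hab hbc.
Qed.

Lemma exists_first_closest x : (0 < k)%N -> exists i, first_closest x i.
Proof.
move=> k_gt0; apply: exists_least_ord.
suff [i hi] : exists i, forall j, j \in enum 'I_k -> closer_piece x i j.
  by exists i => j; apply: hi; rewrite mem_enum.
elim: (enum 'I_k) => [|a s [i hi]]; first by exists (Ordinal k_gt0).
case: (closer_piece_total x i a) => hia.
  by exists i => j; rewrite in_cons => /orP[/eqP ->|/hi].
exists a => j; rewrite in_cons => /orP[/eqP ->|hj]; first exact: closer_piece_refl.
exact: closer_piece_trans hia (hi j hj).
Qed.

Lemma first_closest_unique x i j : first_closest x i -> first_closest x j -> i = j.
Proof.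
move=> [c1 m1] [c2 m2]; apply: val_inj; case: (ltngtP i j) => // h; exfalso.
  exact: m2 _ h c1.
exact: m1 _ h c2.
Qed.

(* By the isosceles property [y] sees every piece at the same distance as [x]. *)
Lemma first_closest_near x y i : closest_piece x i ->
  (forall a, Xs i a -> normv (x - y) < normv (x - a)) ->
  forall i', first_closest x i' <-> first_closest y i'.
Proof.
move=> hC hfar.
have same_dist j b : Xs j b -> normv (y - b) = normv (x - b).
  move=> hb; apply: (normv_isosceles HK); have [a ha hab] := hC j b hb.
  exact: lt_le_trans (hfar a ha) hab.
have closer_iff i1 j1 : closer_piece x i1 j1 <-> closer_piece y i1 j1.
  split => h b hb; have [a ha hab] := h b hb; exists a => //.
    by rewrite (same_dist _ _ ha) (same_dist _ _ hb).
  by rewrite -(same_dist _ _ ha) -(same_dist _ _ hb).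
have closest_iff i1 : closest_piece x i1 <-> closest_piece y i1.
  by split => h j; apply/closer_iff.
move=> i'; rewrite /first_closest closest_iff.
split => -[h1 h2]; split => // i'' hi hc; apply: (h2 i'' hi).
  exact: (proj2 (closest_iff i'') hc).
exact: (proj1 (closest_iff i'') hc).
Qed.

End ClosestPiece.

Section Gluing.
Variables (K : fieldType) (ord : K -> int) (R : realType) (p q : nat).
Hypothesis HK : padic_field ord p q.
Variables (r k : nat) (k_gt0 : (0 < k)%N).
Variables (X : 'rV[K]_r -> Prop) (Xs : 'I_k -> 'rV[K]_r -> Prop).
Variables (f : 'rV[K]_r -> K) (ft : 'I_k -> 'rV[K]_r -> K) (lam : R) (Lam : 'I_k -> R).
Hypotheses (X_cover : forall x, X x <-> exists i, Xs i x)
  (ft_ext : forall i x, Xs i x -> ft i x = f x).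

Local Notation abs := (absK ord R q).
Local Notation normv := (normv ord R q).
Local Notation first_closest := (first_closest ord R q Xs).

Definition glued x : K := ft (epsilon (inhabits (Ordinal k_gt0)) (first_closest x)) x.

Lemma glued_first_closest x i : first_closest x i -> glued x = ft i x.
Proof.
move=> hi; rewrite /glued; congr ft.
apply: first_closest_unique hi; apply: epsilon_spec.
exact: exists_first_closest.
Qed.

Lemma glued_ext x : X x -> glued x = f x.
Proof.
move=> /X_cover [i0 hx]; have [i hi] := exists_first_closest ord R q Xs x k_gt0.
rewrite (glued_first_closest hi); have [a ha hxa] := proj1 hi i0 x hx.
suff -> : x = a by apply: ft_ext.
have normv0 : normv (0 : 'rV[K]_r) <= 0 by apply/normv_le; split => // m; rewrite mxE absK0.
apply/eqP; rewrite -subr_eq0; apply/eqP/(normv_le0 HK).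
by apply: le_trans hxa _; rewrite subrr.
Qed.

Hypotheses (f_lip : lipschitz_on ord q X f lam)
  (ft_lip : forall i, lipschitz_on ord q (fun _ => True) (ft i) (Lam i))
  (lam_ge0 : 0 <= lam) (lam_le_Lam : forall i, lam <= Lam i).

Let Lmax := \big[Num.max/0]_(i < k) Lam i.

Lemma ft_lip_max i x y : abs (ft i x - ft i y) <= Lmax * normv (x - y).
Proof.
apply: le_trans (@ft_lip i x y I I) _; apply: ler_wpM2r; first exact: normv_ge0.
exact: le_bigmax.
Qed.

(* Go through [ft i a = f a] and [f b = ft j b]. *)
Lemma ft_lip_through x y i j a b : Xs i a -> Xs j b ->
  normv (x - a) <= normv (x - y) -> normv (y - b) <= normv (x - y) ->
  abs (ft i x - ft j y) <= Lmax * normv (x - y).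
Proof.
move=> ha hb hxa hyb.
have Lam_le i1 : Lam i1 <= Lmax by apply: le_bigmax.
have Lmax_ge0 : 0 <= Lmax by apply: le_trans lam_ge0 (le_trans (lam_le_Lam i) (Lam_le i)).
have -> : ft i x - ft j y = (ft i x - ft i a) + ((f a - f b) + (ft j b - ft j y)).
  by rewrite -(ft_ext ha) -(ft_ext hb); ring.
apply: (absKD_le HK); last apply: (absKD_le HK).
- by apply: le_trans (ft_lip_max _ _ _) _; apply: ler_wpM2l.
- have Xa : X a by apply/X_cover; exists i.
  have Xb : X b by apply/X_cover; exists j.
  apply: le_trans (@f_lip a b Xa Xb) _; apply: ler_pM => //; first exact: normv_ge0.
    exact: le_trans (lam_le_Lam i) (Lam_le i).
  have -> : a - b = - (x - a) + ((x - y) + (y - b)).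
    by rewrite opprB (addrA (x - y)) subrK addrA subrK.
  by apply: (normvD_le HK); rewrite ?(normvN HK) //; apply: (normvD_le HK).
- by apply: le_trans (ft_lip_max _ _ _) _; apply: ler_wpM2l; rewrite // (normv_sym HK).
Qed.

Lemma first_closest_near_or_same x y i : first_closest x i ->
  (exists2 a, Xs i a & normv (x - a) <= normv (x - y)) \/ first_closest y i.
Proof.
move=> hi; case: (classic (exists2 a, Xs i a & normv (x - a) <= normv (x - y))); first by left.
move=> hn; right; apply/(first_closest_near HK (proj1 hi)) => // a ha.
by rewrite ltNge; apply/negP => hle; apply: hn; exists a.
Qed.

Lemma glued_lipschitz : lipschitz_on ord q (fun _ => True) glued Lmax.
Proof.
move=> x y _ _.
have [i hi] := exists_first_closest ord R q Xs x k_gt0.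
have [j hj] := exists_first_closest ord R q Xs y k_gt0.
rewrite (glued_first_closest hi) (glued_first_closest hj).
case: (first_closest_near_or_same y hi) => [[a ha hxa]|hyi].
  case: (first_closest_near_or_same x hj) => [[b hb hyb]|hxj].
    by apply: (ft_lip_through ha hb hxa); rewrite [normv (x - y)](normv_sym HK).
  by rewrite (first_closest_unique hi hxj); apply: ft_lip_max.
by rewrite (first_closest_unique hj hyi); apply: ft_lip_max.
Qed.

End Gluing.

(* Variables of the formula defining the glued function: [x] occupies
   [0, ..., r - 1], the value [y] is [r], then come a block [b] of [r]
   variables, a block [a] of [r] variables, and two scratch variables [z], [w].
   [shift_block o r] moves [0, ..., r - 1] onto the block at [o] and all other
   variables above [w], injectively. *)
Definition blk_b (r : nat) := r.+1.
Definition blk_a (r : nat) := (r.+1 + r)%N.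
Definition var_z (r : nat) := (r.+1 + r + r)%N.
Definition var_w (r : nat) := (var_z r).+1.
Definition shift_block (o r m : nat) := if (m < r)%N then (o + m)%N else (m + (var_w r).+1)%N.

Lemma shift_block_inj o r : (o + r <= (var_w r).+1)%N -> injective (shift_block o r).
Proof. by move=> ho a b; rewrite /shift_block; case: ifP => ha; case: ifP => hb; lia. Qed.

Section DefinableGluing.
Variables (K : fieldType) (ord : K -> int) (R : realType) (p q : nat).
Hypothesis HK : padic_field ord p q.
Variables (pi : K) (r : nat).
Hypotheses (pi_neq0 : pi != 0) (ord_pi : ord pi = 1).

Local Notation l := (root_exponent p).
Local Notation normv := (normv ord R q).

Definition TCoordDiff (o m : nat) : term K :=
  TAdd (TVar K m) (TMul (TConst (-1)) (TVar K (o + m))).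

Definition FAbsLe (s t : term K) : formula K :=
  FEx (var_z r) (FAnd
    (FEx (var_w r) (FEq (TExp l (TVar K (var_w r)))
       (TAdd (TConst 1) (TMul (TConst pi) (TExp l (TVar K (var_z r)))))))
    (FEq s (TMul (TVar K (var_z r)) t))).

Definition FNormLe : formula K :=
  FBigAnd (enum 'I_r) (fun m : 'I_r => FOr (FEq (TCoordDiff (blk_a r) m) (TConst 0))
    (FBigOr (enum 'I_r) (fun m' : 'I_r =>
       FAbsLe (TCoordDiff (blk_a r) m) (TCoordDiff (blk_b r) m')))).

Definition FCloser (psi_i psi_j : formula K) : formula K :=
  FAlls (blk_b r) r (FImp (frename (shift_block (blk_b r) r) psi_j)
    (FExs (blk_a r) r (FAnd (frename (shift_block (blk_a r) r) psi_i) FNormLe))).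

Definition env_b (x : 'rV[K]_r) (y : K) (g : nat -> K) :=
  set_block (upd (env_of x) r y) (blk_b r) r g.

Definition env_ab (x : 'rV[K]_r) (y : K) (g h : nat -> K) :=
  set_block (env_b x y g) (blk_a r) r h.

Ltac unfold_env := rewrite /env_ab /env_b /set_block /upd /blk_a /blk_b /shift_block /var_w /var_z.

Lemma env_ab_x x y g h m : (m < r)%N -> env_ab x y g h m = env_of x m.
Proof. by move=> hm; unfold_env; repeat (case: ifP => ?; try lia). Qed.

Lemma env_ab_a x y g h m : (m < r)%N -> env_ab x y g h (blk_a r + m) = h m.
Proof. by move=> hm; unfold_env; case: ifP => ?; try lia; congr h; lia. Qed.

Lemma env_ab_b x y g h m : (m < r)%N -> env_ab x y g h (blk_b r + m) = g m.
Proof. by move=> hm; unfold_env; repeat (case: ifP => ?; try lia); congr g; lia. Qed.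

Lemma env_b_shift x y g :
  env_b x y g \o shift_block (blk_b r) r = env_of (\row_(m < r) g m).
Proof.
apply: functional_extensionality => m /=; case: (ltnP m r) => hm.
  rewrite (env_of_lt _ hm) mxE /shift_block hm; unfold_env.
  by repeat (case: ifP => ?; try lia); rewrite addKn.
rewrite env_of_ge // /shift_block ltnNge hm /=; unfold_env.
by repeat (case: ifP => ?; try lia); rewrite env_of_ge //; lia.
Qed.

Lemma env_ab_shift x y g h :
  env_ab x y g h \o shift_block (blk_a r) r = env_of (\row_(m < r) h m).
Proof.
apply: functional_extensionality => m /=; case: (ltnP m r) => hm.
  rewrite (env_of_lt _ hm) mxE /shift_block hm; unfold_env.
  by repeat (case: ifP => ?; try lia); rewrite addKn.
rewrite env_of_ge // /shift_block ltnNge hm /=; unfold_env.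
by repeat (case: ifP => ?; try lia); rewrite env_of_ge //; lia.
Qed.

Lemma holds_FAbsLe E s t : holds E (FAbsLe s t) <->
  exists2 z, valge ord z 0 & teval (upd E (var_z r) z) s = z * teval (upd E (var_z r) z) t.
Proof.
have zw : (var_z r == var_w r) = false by rewrite /var_w; lia.
have e_w z w : teval (upd (upd E (var_z r) z) (var_w r) w) (TExp l (TVar K (var_w r))) = w ^+ l.
  by rewrite teval_TExp /= /upd eqxx.
have e_z z w : teval (upd (upd E (var_z r) z) (var_w r) w) (TExp l (TVar K (var_z r))) = z ^+ l.
  by rewrite teval_TExp /= /upd zw eqxx.
have e_var z : upd E (var_z r) z (var_z r) = z by rewrite /upd eqxx.
rewrite /FAbsLe /=; split => [[z [[w hw] hst]]|[z hz hst]]; exists z.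
- by apply/(valge0_iff_root HK pi_neq0 ord_pi); exists w; rewrite -(e_w z w) -(e_z z w).
- by rewrite e_var in hst.
- split; last by rewrite e_var.
  by have [w hw] := (valge0_iff_root HK pi_neq0 ord_pi z).1 hz; exists w; rewrite /= e_w e_z.
Qed.

Lemma teval_TCoordDiff_upd E z o (m : 'I_r) : (o + r <= var_z r)%N ->
  teval (upd E (var_z r) z) (TCoordDiff o m) = teval E (TCoordDiff o m).
Proof.
move=> ho; have hm := ltn_ord m.
have [m_z om_z] : (m == var_z r :> nat) = false /\ (o + m == var_z r)%N = false.
  by move: ho; rewrite /var_z; lia.
by rewrite /= /upd m_z om_z.
Qed.

Lemma teval_TCoordDiff_env_ab x y g h (m : 'I_r) :
  teval (env_ab x y g h) (TCoordDiff (blk_a r) m) = (x - \row_(j < r) h j) ord0 m /\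
  teval (env_ab x y g h) (TCoordDiff (blk_b r) m) = (x - \row_(j < r) g j) ord0 m.
Proof.
have hm := ltn_ord m; rewrite /= env_ab_x // env_ab_a // env_ab_b // (env_of_lt _ hm) !mxE.
have -> : Ordinal hm = m by apply: val_inj.
by rewrite !mulN1r.
Qed.

Lemma holds_FNormLe x y g h : holds (env_ab x y g h) FNormLe <->
  normv (x - \row_(j < r) h j) <= normv (x - \row_(j < r) g j).
Proof.
have upd_a z (m : 'I_r) : teval (upd (env_ab x y g h) (var_z r) z) (TCoordDiff (blk_a r) m) =
    teval (env_ab x y g h) (TCoordDiff (blk_a r) m).
  by apply: teval_TCoordDiff_upd; rewrite /blk_a /var_z; lia.
have upd_b z (m : 'I_r) : teval (upd (env_ab x y g h) (var_z r) z) (TCoordDiff (blk_b r) m) =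
    teval (env_ab x y g h) (TCoordDiff (blk_b r) m).
  by apply: teval_TCoordDiff_upd; rewrite /blk_b /var_z; lia.
have diff_a m := (teval_TCoordDiff_env_ab x y g h m).1.
have diff_b m := (teval_TCoordDiff_env_ab x y g h m).2.
rewrite (normv_le_coords HK) /FNormLe holds_FBigAnd; split => H m.
  have := H m (mem_enum _ m); rewrite holds_FOr.
  case=> [e|/holds_FBigOr [m' _ /holds_FAbsLe [z hz]]]; first by left; rewrite -diff_a; exact: e.
  by rewrite upd_a upd_b diff_a diff_b => e; right; exists m', z.
move=> _; rewrite holds_FOr; case: (H m) => [e|[m' [z hz e]]].
  by left; change (teval (env_ab x y g h) (TCoordDiff (blk_a r) m) = 0); rewrite diff_a.
right; apply/holds_FBigOr; exists m'; first exact: mem_enum.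
by apply/holds_FAbsLe; exists z; rewrite // upd_a upd_b diff_a diff_b.
Qed.

Variables (k : nat) (Xs : 'I_k -> 'rV[K]_r -> Prop) (psi : 'I_k -> formula K).
Hypothesis psi_spec : forall i x, Xs i x <-> holds (env_of x) (psi i).

Lemma holds_FCloser x y i j :
  holds (upd (env_of x) r y) (FCloser (psi i) (psi j)) <-> closer_piece ord R q Xs x i j.
Proof.
have shift_b := shift_block_inj (o := blk_b r) (r := r) ltac:(rewrite /blk_b /var_w /var_z; lia).
have shift_a := shift_block_inj (o := blk_a r) (r := r) ltac:(rewrite /blk_a /var_w /var_z; lia).
rewrite /FCloser holds_FAlls; split => [H b hb|H g].
  have := H (env_of b); rewrite -/(env_b x y (env_of b)) holds_FImp holds_rename //.
  rewrite env_b_shift row_env_of => /(_ (proj1 (psi_spec _ _) hb)).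
  rewrite holds_FExs => -[h /= [ha hab]]; exists (\row_(m < r) h m).
    by apply/psi_spec; move: ha; rewrite holds_rename // -/(env_ab x y (env_of b) h) env_ab_shift.
  by move: hab; rewrite -/(env_ab x y (env_of b) h) holds_FNormLe row_env_of.
rewrite -/(env_b x y g) holds_FImp holds_rename // env_b_shift => /psi_spec /H [a ha hab].
rewrite holds_FExs; exists (env_of a); split.
  by rewrite holds_rename // -/(env_ab x y g (env_of a)) env_ab_shift row_env_of; apply/psi_spec.
by rewrite -/(env_ab x y g (env_of a)) holds_FNormLe row_env_of.
Qed.

Definition FClosest (i : 'I_k) : formula K :=
  FBigAnd (enum 'I_k) (fun j => FCloser (psi i) (psi j)).

Lemma holds_FClosest x y i :
  holds (upd (env_of x) r y) (FClosest i) <-> closest_piece ord R q Xs x i.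
Proof.
rewrite /FClosest holds_FBigAnd; split => h j; first by apply/holds_FCloser/h; rewrite mem_enum.
by move=> _; apply/holds_FCloser.
Qed.

Definition FGlued (phi : 'I_k -> formula K) : formula K :=
  FBigOr (enum 'I_k) (fun i => FAnd (FClosest i)
    (FAnd (FBigAnd [seq i' : 'I_k <- enum 'I_k | (i' < i)%N] (fun i' => FNot (FClosest i')))
      (phi i))).

Lemma holds_FGlued phi x y : holds (upd (env_of x) r y) (FGlued phi) <->
  exists2 i, first_closest ord R q Xs x i & holds (upd (env_of x) r y) (phi i).
Proof.
rewrite /FGlued holds_FBigOr; split => -[i].
  move=> _ /= [/holds_FClosest hC [/holds_FBigAnd hmin hphi]]; exists i => //.
  split => // i' hi' /(holds_FClosest x y) hC'.
  by apply: (hmin i') hC'; rewrite mem_filter hi' mem_enum.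
move=> [hC hmin] hphi; exists i; first by rewrite mem_enum.
split; first exact/holds_FClosest.
split => //; apply/holds_FBigAnd => i'; rewrite mem_filter => /andP[hi' _] /=.
by move/holds_FClosest; apply: hmin.
Qed.

Lemma fadm_FGlued an phi : (forall i, fadm ord an (psi i)) -> (forall i, fadm ord an (phi i)) ->
  fadm ord an (FGlued phi).
Proof.
move=> hpsi hphi.
have hC i : fadm ord an (FClosest i).
  rewrite /FClosest; apply: fadm_FBigAnd => j; rewrite /FCloser /FAlls /=.
  apply: fadm_FExs => /=; split; first exact: fadm_rename.
  apply: fadm_FExs => /=; split; first exact: fadm_rename.
  rewrite /FNormLe; apply: fadm_FBigAnd => m /=; split; first by [].
  apply: fadm_FBigOr => m' /=; split; last by [].
  by split; [apply: tadm_TExp|split => //; split => //; apply: tadm_TExp].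
by rewrite /FGlued; apply: fadm_FBigOr => i /=; split => //; split => //; apply: fadm_FBigAnd.
Qed.

End DefinableGluing.

Lemma glued_definable (K : fieldType) (ord : K -> int) (R : realType) (p q : nat)
    (HK : padic_field ord p q) (an : bool) (r k : nat) (k_gt0 : (0 < k)%N)
    (Xs : 'I_k -> 'rV[K]_r -> Prop) (ft : 'I_k -> 'rV[K]_r -> K) :
  (forall i, definable_set ord an (Xs i)) ->
  (forall i, definable_fun ord an (fun _ => True) (ft i)) ->
  definable_fun ord an (fun _ => True) (glued ord R q k_gt0 Xs ft).
Proof.
move=> /choice [psi hpsi] /choice [phi hphi].
have [pi [pi_neq0 ord_pi]] := pf_unif HK.
exists (FGlued p pi r psi phi); split.
  by apply: fadm_FGlued => i; [exact: (hpsi i).1|exact: (hphi i).1].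
move=> x y; rewrite (holds_FGlued R HK pi_neq0 ord_pi (fun i => (hpsi i).2)).
split => [[_ ->]|[i hi /(hphi i).2 [_ ->]]]; last by rewrite (glued_first_closest _ _ hi).
have [i hi] := exists_first_closest ord R q Xs x k_gt0.
by exists i => //; apply/(hphi i).2; rewrite (glued_first_closest _ _ hi).
Qed.

Unset Implicit Arguments.

Theorem mainTheorem2 (R : realType) (K : fieldType) (ord : K -> int) (p q : nat)
  (HK : padic_field ord p q) (an : bool) (r : nat)
  (X : 'rV[K]_r -> Prop) (lam : R) (f : 'rV[K]_r -> K)
  (k : nat) (Xs : 'I_k -> 'rV[K]_r -> Prop) (Lam : 'I_k -> R)
  (ft : 'I_k -> 'rV[K]_r -> K) :
  (0 < k)%N ->
  definable_set ord an X ->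
  0 < lam ->
  definable_fun ord an X f ->
  lipschitz_on ord q X f lam ->
  (forall x, X x <-> exists i, Xs i x) ->
  (forall i, definable_set ord an (Xs i)) ->
  (forall i, lam <= Lam i) ->
  (forall i, definable_fun ord an (fun _ => True) (ft i)) ->
  (forall i, lipschitz_on ord q (fun _ => True) (ft i) (Lam i)) ->
  (forall i x, Xs i x -> ft i x = f x) ->
  exists F : 'rV[K]_r -> K,
    [/\ definable_fun ord an (fun _ => True) F,
        lipschitz_on ord q (fun _ => True) F (\big[Num.max/0]_(i < k) Lam i) &
        forall x, X x -> F x = f x].
Proof.
move=> k_gt0 _ lam_gt0 _ f_lip X_cover Xs_def lam_le ft_def ft_lip ft_ext.
exists (glued ord R q k_gt0 Xs ft); split.
- exact: (glued_definable R HK k_gt0 Xs_def ft_def).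
- exact: (glued_lipschitz HK k_gt0 X_cover ft_ext f_lip ft_lip (ltW lam_gt0) lam_le).
- by move=> x; apply: (glued_ext R HK k_gt0 X_cover ft_ext).
Qed.
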